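(* Let $G=PL_\delta(\mathbb{R}_{+})$ and $H=\{f\in G : \lim_{x\to\infty} f(x)/x = 1\}$. Then the quotient group $G/H$ is torsion-free: if $g\in G$ and $g^r\in H$ for some positive integer $r$, then $g\in H$.
   Context: A homeomorphism $f$ of $[0,\infty)$ is piecewise linear if its set $B(f)$ of breakpoints (points where $f$ is not differentiable) is discrete and $f$ is affine on each complementary interval. Its set of slopes is $\Lambda(f)=\{f'(t): t\notin B(f)\}$; $\Lambda(f)$ is bounded if there is $K>1$ with $K^{-1}<|\lambda|<K$ for all $\lambda\in\Lambda(f)$. $PL_\delta(\mathbb{R}_{+})$ denotes the group (under composition) of piecewise-linear homeomorphisms of $[0,\infty)$ with bounded set of slopes. $H$ is a normal subgroup of $G$. *)

From Stdlib Require Import Reals Lra List.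
Open Scope R_scope.

Definition maps_nonneg (f : R -> R) : Prop :=
  forall x, 0 <= x -> 0 <= f x.

Definition cont_on_nonneg (f : R -> R) : Prop :=
  forall x, 0 <= x -> forall eps, 0 < eps ->
    exists delta, 0 < delta /\
      forall y, 0 <= y -> Rabs (y - x) < delta -> Rabs (f y - f x) < eps.

Definition homeo_nonneg (f : R -> R) : Prop :=
  maps_nonneg f /\ cont_on_nonneg f /\
  exists h : R -> R, maps_nonneg h /\ cont_on_nonneg h /\
    (forall x, 0 <= x -> h (f x) = x) /\
    (forall y, 0 <= y -> f (h y) = y).

Definition affine_on (f : R -> R) (a b : R) : Prop :=
  exists m c, forall x, a <= x <= b -> f x = m * x + c.

(* Piecewise linear on [0,oo) with discrete breakpoint set: every bounded
   interval [0,M] is cut by finitely many points into intervals on which f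
   is affine.  The list [l] is the strictly increasing sequence of cut points
   0 = t_0 < t_1 < ... < t_n = M. *)
Fixpoint affine_chain (f : R -> R) (a : R) (l : list R) (M : R) : Prop :=
  match l with
  | nil => a = M
  | t :: l' => a < t /\ affine_on f a t /\ affine_chain f t l' M
  end.

Definition piecewise_linear (f : R -> R) : Prop :=
  forall M, 0 < M -> exists l : list R, affine_chain f 0 l M.

(* The set of slopes Lambda(f) = { f'(t) : t not a breakpoint } (t > 0) is
   bounded: K^-1 < |lambda| < K. *)
Definition bounded_slopes (f : R -> R) : Prop :=
  exists K, 1 < K /\
    forall t l, 0 < t -> derivable_pt_lim f t l -> / K < Rabs l < K.

Definition PLdelta (f : R -> R) : Prop :=
  homeo_nonneg f /\ piecewise_linear f /\ bounded_slopes f.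

Definition inH (f : R -> R) : Prop :=
  PLdelta f /\
  forall eps, 0 < eps -> exists N, forall x, N < x -> Rabs (f x / x - 1) < eps.

Fixpoint iter_comp (r : nat) (g : R -> R) : R -> R :=
  match r with
  | O => fun x => x
  | S r' => fun x => g (iter_comp r' g x)
  end.

(* An orientation-preserving homeomorphism g of [0,oo) is increasing, so for
   x > 0 the orbit x, g x, g^2 x, ... is monotone: it moves away from x in the
   direction of g x.  Hence g x lies between x and g^r x, and
   |g x / x - 1| <= |g^r x / x - 1|, which tends to 0 when g^r lies in H. *)

From Stdlib Require Import Reals Lra.
Open Scope R_scope.

Lemma Rabs_Rmax0_sub_le (x y : R) : Rabs (Rmax 0 y - Rmax 0 x) <= Rabs (y - x).
Proof.
  unfold Rmax.
  destruct (Rle_dec 0 y); destruct (Rle_dec 0 x); split_Rabs; lra.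
Qed.

(* Extending g by g 0 on the negative axis makes it continuous on all of R. *)
Lemma cont_on_nonneg_continuity_Rmax0 (g : R -> R) :
  cont_on_nonneg g -> continuity (fun t => g (Rmax 0 t)).
Proof.
  intros Hc x. unfold continuity_pt, continue_in, limit1_in, limit_in.
  intros eps Heps. simpl. unfold R_dist.
  destruct (Hc (Rmax 0 x) (Rmax_l 0 x) eps Heps) as [d [Hd Hd']].
  exists d; split; [lra|]. intros y [_ Hy].
  apply Hd'; [apply Rmax_l|].
  eapply Rle_lt_trans; [apply Rabs_Rmax0_sub_le | exact Hy].
Qed.

Lemma cont_on_nonneg_IVT (g : R -> R) (a b z : R) :
  cont_on_nonneg g -> 0 <= a <= b ->
  Rmin (g a) (g b) <= z <= Rmax (g a) (g b) ->
  exists d, a <= d <= b /\ g d = z.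
Proof.
  intros Hc [Ha Hab] Hz.
  set (F := fun t => g (Rmax 0 t) - z).
  assert (HF : continuity F).
  { apply continuity_minus;
      [apply cont_on_nonneg_continuity_Rmax0; exact Hc | apply continuity_const].
    intros u v; reflexivity. }
  assert (Fa : F a = g a - z) by (unfold F; rewrite Rmax_right; lra).
  assert (Fb : F b = g b - z) by (unfold F; rewrite Rmax_right; lra).
  destruct (IVT_cor F a b HF Hab) as [d [Hd Fd]].
  { rewrite Fa, Fb. revert Hz. unfold Rmin, Rmax.
    destruct (Rle_dec (g a) (g b)); intros; nra. }
  exists d; split; [exact Hd|].
  unfold F in Fd. rewrite Rmax_right in Fd; lra.
Qed.

Section HomeoNonneg.

Variable g : R -> R.
Hypothesis Hg : homeo_nonneg g.

Lemma homeo_nonneg_inj (x y : R) : 0 <= x -> 0 <= y -> g x = g y -> x = y.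
Proof.
  destruct Hg as [_ [_ [h [_ [_ [Hhg _]]]]]].
  intros Hx Hy E. rewrite <- (Hhg x Hx), <- (Hhg y Hy), E. reflexivity.
Qed.

Lemma homeo_nonneg_0 : g 0 = 0.
Proof.
  destruct Hg as [Hm [Hc [h [Hhm [_ [_ Hgh]]]]]].
  destruct (Rle_lt_dec (g 0) 0) as [Hle | Hpos].
  { pose proof (Hm 0 (Rle_refl 0)); lra. }
  exfalso.
  (* The preimage c of 0 is positive; then g takes the value of one endpoint
     of [0, c+1] a second time, contradicting injectivity. *)
  set (c := h 0).
  assert (gc : g c = 0) by (apply Hgh; lra).
  assert (cpos : 0 < c).
  { assert (Hc0 : 0 <= c) by (apply Hhm; lra).
    destruct Hc0 as [? | E]; [assumption|]. rewrite <- E in gc. lra. }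
  assert (0 <= g (c + 1)) by (apply Hm; lra).
  destruct (Rle_lt_dec (g (c + 1)) (g 0)).
  - destruct (cont_on_nonneg_IVT g 0 c (g (c + 1)) Hc) as [d [Hd Ed]]; [lra| |].
    { rewrite gc. unfold Rmin, Rmax; destruct (Rle_dec (g 0) 0); lra. }
    assert (d = c + 1) by (apply homeo_nonneg_inj; lra). lra.
  - destruct (cont_on_nonneg_IVT g c (c + 1) (g 0) Hc) as [d [Hd Ed]]; [lra| |].
    { rewrite gc. unfold Rmin, Rmax; destruct (Rle_dec 0 (g (c + 1))); lra. }
    assert (d = 0) by (apply homeo_nonneg_inj; lra). lra.
Qed.

Lemma homeo_nonneg_lt (x y : R) : 0 <= x -> x < y -> g x < g y.
Proof.
  destruct Hg as [Hm [Hc _]].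
  intros Hx Hxy.
  destruct (Rlt_le_dec (g x) (g y)) as [? | Hle]; [assumption|]. exfalso.
  assert (0 <= g y) by (apply Hm; lra).
  destruct (cont_on_nonneg_IVT g 0 x (g y) Hc) as [d [Hd Ed]]; [lra| |].
  { rewrite homeo_nonneg_0. unfold Rmin, Rmax; destruct (Rle_dec 0 (g x)); lra. }
  assert (d = y) by (apply homeo_nonneg_inj; lra). lra.
Qed.

Lemma homeo_nonneg_le (x y : R) : 0 <= x -> x <= y -> g x <= g y.
Proof.
  intros Hx [Hxy | <-]; [left; apply homeo_nonneg_lt |]; lra.
Qed.

End HomeoNonneg.

Section MonotoneIteration.

Variable g : R -> R.
Hypothesis g_nonneg : maps_nonneg g.
Hypothesis g_le : forall x y, 0 <= x -> x <= y -> g x <= g y.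

Lemma iter_comp_nonneg (n : nat) (x : R) : 0 <= x -> 0 <= iter_comp n g x.
Proof. induction n; simpl; auto. Qed.

Lemma iter_comp_ge (x : R) : 0 <= x -> x <= g x ->
  forall n, g x <= iter_comp (S n) g x.
Proof.
  intros Hx Hgx n. simpl. apply g_le; [exact Hx|].
  induction n as [|n IH]; simpl; [lra|].
  apply Rle_trans with (g x); [exact Hgx|].
  apply g_le; assumption.
Qed.

Lemma iter_comp_le (x : R) : 0 <= x -> g x <= x ->
  forall n, iter_comp (S n) g x <= g x.
Proof.
  intros Hx Hgx n. simpl. apply g_le; [apply iter_comp_nonneg; exact Hx|].
  induction n as [|n IH]; simpl; [lra|].
  apply Rle_trans with (g x); [|exact Hgx].
  apply g_le; [apply iter_comp_nonneg; exact Hx | exact IH].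
Qed.

End MonotoneIteration.

Lemma Rabs_ratio_sub1_le (x a b : R) : 0 < x ->
  (x <= a <= b \/ b <= a <= x) -> Rabs (a / x - 1) <= Rabs (b / x - 1).
Proof.
  intros Hx Hab.
  assert (E : forall u, u / x - 1 = (u - x) * / x) by (intros; field; lra).
  rewrite !E, !Rabs_mult.
  apply Rmult_le_compat_r; [apply Rabs_pos|].
  destruct Hab; split_Rabs; lra.
Qed.

Theorem theorem2 :
  forall (g : R -> R) (r : nat),
    PLdelta g -> (0 < r)%nat -> inH (iter_comp r g) -> inH g.
Proof.
  intros g r Hg Hr [_ Hlim].
  split; [exact Hg|].
  destruct r as [|r]; [inversion Hr|].
  destruct Hg as [Hh _].
  pose proof (homeo_nonneg_le g Hh) as g_le.
  assert (g_nonneg : maps_nonneg g) by apply Hh.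
  intros eps Heps. destruct (Hlim eps Heps) as [N HN].
  exists (Rmax N 0). intros x Hx.
  assert (x0 : 0 < x) by (eapply Rle_lt_trans; [apply Rmax_r | exact Hx]).
  eapply Rle_lt_trans;
    [| apply HN; eapply Rle_lt_trans; [apply Rmax_l | exact Hx]].
  apply Rabs_ratio_sub1_le; [exact x0|].
  destruct (Rle_dec x (g x)) as [Hle | Hgt].
  - left. split; [exact Hle | apply iter_comp_ge; auto; lra].
  - right. split; [apply iter_comp_le; auto; lra | lra].
Qed.
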